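(* If $G$ is a clique-regular graph with respect to a clique partition $F$, then $\mathcal E(\mathcal Q_F)=\mathcal E(G)$.
   Context: All graphs are finite and simple, $V(G)=\{1,\dots,n\}$. A clique partition of $G$ is a set $F=\{C_1,\dots,C_k\}$ of cliques such that every edge lies in exactly one $C_j$. $\mathcal M_F$ is the $n\times k$ $(0,1)$-matrix with $(i,j)$-entry $1$ iff $i\in C_j$, and $\mathcal Q_F=\mathcal M_F\mathcal M_F^T$. The clique-degree $t_i^F$ is the number of cliques of $F$ containing $i$; $G$ is clique-regular if all $t_i^F$ are equal. $\mathcal E(\mathcal Q_F)=\sum_{i=1}^n|\lambda_i(\mathcal Q_F)-\bar t|$ with $\bar t=\frac1n\sum_{i=1}^n t_i^F$, and $\mathcal E(G)=\sum_{i=1}^n|\lambda_i(G)|$ is the sum of absolute values of the adjacency eigenvalues. *)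

From HB Require Import structures.
From mathcomp Require Import all_boot all_order all_algebra all_field.
Set Implicit Arguments. Unset Strict Implicit. Unset Printing Implicit Defensive.
Import Order.TTheory GRing.Theory Num.Theory.
Local Open Scope ring_scope.

Definition simple_graph n (e : rel 'I_n) : Prop :=
  irreflexive e /\ symmetric e.

Definition is_clique n (e : rel 'I_n) (C : {set 'I_n}) : Prop :=
  forall i j, i \in C -> j \in C -> i != j -> e i j.

Definition clique_partition n (e : rel 'I_n) (F : {set {set 'I_n}}) : Prop :=
  (forall C, C \in F -> is_clique e C) /\
  (forall i j, e i j -> #|[set C in F | (i \in C) && (j \in C)]| = 1%N).

Definition clique_degree n (F : {set {set 'I_n}}) (i : 'I_n) : nat :=
  #|[set C in F | i \in C]|.

Definition clique_regular n (F : {set {set 'I_n}}) : Prop :=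
  exists t, forall i, clique_degree F i = t.

Definition incM n (F : {set {set 'I_n}}) : 'M[algC]_(n, #|F|) :=
  \matrix_(i < n, j < #|F|) ((i \in enum_val j : bool)%:R).

Definition QF n (F : {set {set 'I_n}}) : 'M[algC]_n := incM F *m (incM F)^T.

Definition adjmx n (e : rel 'I_n) : 'M[algC]_n := \matrix_(i, j) ((e i j : bool)%:R).

Definition eigenvalues n (A : 'M[algC]_n) : seq algC :=
  sval (closed_field_poly_normal (char_poly A)).

Definition mean_clique_degree n (F : {set {set 'I_n}}) : algC :=
  (\sum_(i < n) clique_degree F i)%:R / n%:R.

Definition energyQ n (F : {set {set 'I_n}}) : algC :=
  \sum_(x <- eigenvalues (QF F)) `|x - mean_clique_degree F|.

Definition graph_energy n (e : rel 'I_n) : algC :=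
  \sum_(x <- eigenvalues (adjmx e)) `|x|.

From mathcomp Require Import all_boot all_order all_algebra all_field.
Set Implicit Arguments. Unset Strict Implicit. Unset Printing Implicit Defensive.
Import Order.TTheory GRing.Theory Num.Theory.
Local Open Scope ring_scope.

(* Entry (i, j) of Q_F counts the cliques of F containing both i and j. For a
   clique partition of a simple graph this is the adjacency entry off the
   diagonal and the clique-degree t_i on it, so clique-regularity gives
   Q_F = A(G) + t I. The spectrum of Q_F is then that of A(G) shifted by t,
   and t is the mean clique-degree. *)

Lemma char_poly_add_scalar (R : comNzRingType) n (A : 'M[R]_n) (t : R) :
  char_poly (A + t%:M) = char_poly A \Po ('X - t%:P).
Proof.
rewrite /char_poly -det_map_mx; congr (\det _); apply/matrixP => i j.
rewrite !mxE /= comp_polyB comp_polyC polyCD.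
by case: (i == j); rewrite ?mulr1n ?mulr0n ?comp_polyX ?comp_poly0 ?addr0 // opprD addrA addrAC.
Qed.

Lemma char_poly_eigenvalues n (A : 'M[algC]_n) :
  char_poly A = \prod_(z <- eigenvalues A) ('X - z%:P).
Proof.
have := svalP (closed_field_poly_normal (char_poly A)).
rewrite -/(eigenvalues A) => {1}->.
by rewrite (monicP (char_poly_monic A)) scale1r.
Qed.

Lemma size_eigenvalues n (A : 'M[algC]_n) : size (eigenvalues A) = n.
Proof.
by have := size_char_poly A; rewrite char_poly_eigenvalues size_prod_XsubC => -[].
Qed.

Lemma eigenvalues0 (A : 'M[algC]_0) : eigenvalues A = [::].
Proof. exact/size0nil/size_eigenvalues. Qed.

Lemma eigenvalues_add_scalar n (A : 'M[algC]_n) t :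
  perm_eq (eigenvalues (A + t%:M)) [seq z + t | z <- eigenvalues A].
Proof.
apply: prod_XsubC_eq.
rewrite -char_poly_eigenvalues char_poly_add_scalar char_poly_eigenvalues.
rewrite big_map rmorph_prod; apply: eq_bigr => z _ /=.
by rewrite comp_polyB comp_polyX comp_polyC polyCD opprD addrA addrAC.
Qed.

Lemma sum_eigenvalues_add_scalar n (A : 'M[algC]_n) t (f : algC -> algC) :
  \sum_(z <- eigenvalues (A + t%:M)) f (z - t) = \sum_(z <- eigenvalues A) f z.
Proof.
rewrite (perm_big _ (eigenvalues_add_scalar A t)) big_map.
by apply: eq_bigr => z _; rewrite addrK.
Qed.

Lemma QF_mxE n (F : {set {set 'I_n}}) i j :
  QF F i j = #|[set C in F | (i \in C) && (j \in C)]|%:R.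
Proof.
pose common (C : {set 'I_n}) : algC := ((i \in C) && (j \in C))%:R.
rewrite !mxE (eq_bigr (common \o enum_val)) => [|k _]; last first.
  by rewrite !mxE -natrM mulnb.
rewrite -big_enum_val -natr_sum -sum1_card; congr _%:R.
rewrite big_mkcond [RHS]big_mkcond; apply: eq_bigr => C _.
by rewrite inE; case: (C \in F).
Qed.

Lemma QF_clique_regular n (e : rel 'I_n) (F : {set {set 'I_n}}) t :
  simple_graph e -> clique_partition e F -> (forall i, clique_degree F i = t) ->
  QF F = adjmx e + t%:R%:M.
Proof.
move=> [e_irr _] [F_cliques F_part] F_reg; apply/matrixP => i j.
rewrite QF_mxE !mxE; have [<-|nij] := eqVneq i j.
  rewrite e_irr add0r mulr1n -(F_reg i); congr _%:R.
  by apply: eq_card => C; rewrite !inE andbb.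
rewrite mulr0n addr0; case eij: (e i j); first by rewrite F_part.
suff -> : [set C in F | (i \in C) && (j \in C)] = set0 by rewrite cards0.
apply/setP => C; rewrite !inE; apply/and3P => -[CF iC jC].
by move: (F_cliques C CF i j iC jC nij); rewrite eij.
Qed.

Lemma mean_clique_degree_regular n (F : {set {set 'I_n}}) t :
  (0 < n)%N -> (forall i, clique_degree F i = t) -> mean_clique_degree F = t%:R.
Proof.
move=> n_gt0 F_reg; rewrite /mean_clique_degree (eq_bigr (fun=> t)) ?sum_nat_const //.
by rewrite card_ord natrM mulrC mulKf // pnatr_eq0 -lt0n.
Qed.

Theorem mainTheorem9 (n : nat) (e : rel 'I_n) (F : {set {set 'I_n}}) :
  simple_graph e -> clique_partition e F -> clique_regular F ->
  energyQ F = graph_energy e.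
Proof.
move=> e_simple F_part [t F_reg].
have [n0|n_gt0] := posnP n.
  (* the mean clique-degree is the junk value 0 / 0 here, but both spectra are empty *)
  by subst n; rewrite /energyQ /graph_energy !eigenvalues0 !big_nil.
rewrite /energyQ (mean_clique_degree_regular n_gt0 F_reg).
rewrite (QF_clique_regular e_simple F_part F_reg).
exact: (sum_eigenvalues_add_scalar (adjmx e) t%:R (fun z => `|z|)).
Qed.
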